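(* For all integers $d\ge 0$ and $t>0$, the unary words $a^d$ and $a^{d+t}$ can be separated exactly by a 2-state AfA over $\{a\}$ whose end-marker operator $A_\$$ is the identity.
   Context: An $n$-state affine finite automaton (AfA) over a finite alphabet $\Sigma$ consists of real $n\times n$ matrices $A_\sigma$ for $\sigma\in\Sigma\cup\{\$\}$ ($\$$ a right end-marker not in $\Sigma$), each of whose columns sums to $1$; an initial vector $v_0\in\mathbb{R}^n$ whose entries sum to $1$; and a set $E_a\subseteq\{1,\dots,n\}$ of accepting states. On input $w=w_1\cdots w_k$ the final vector is $v_f=A_\$A_{w_k}\cdots A_{w_1}v_0$, and $w$ is accepted with probability $\sum_{j\in E_a}|v_f[j]|\big/\sum_{j=1}^n|v_f[j]|$. A pair of words is separated exactly if one is accepted with probability $1$ and the other with probability $0$. *)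

From Stdlib Require Import Reals List.
Import ListNotations.
Open Scope R_scope.

(* States are indexed 0..n-1 (the paper's 1..n). *)
Definition rsum (n : nat) (f : nat -> R) : R :=
  fold_right Rplus 0 (map f (seq 0 n)).

Definition Mat := nat -> nat -> R.   (* A i j = entry in row i, column j *)
Definition Vec := nat -> R.

Definition mat_vec (n : nat) (A : Mat) (v : Vec) : Vec :=
  fun i => rsum n (fun j => A i j * v j).

Record AfA (n : nat) (Sigma : Type) := mkAfA {
  trans  : Sigma -> Mat;
  endmat : Mat;
  init   : Vec;
  acc    : nat -> bool        (* E_a (only j < n are relevant) *)
}.
Arguments trans {n Sigma}.
Arguments endmat {n Sigma}.
Arguments init {n Sigma}.
Arguments acc {n Sigma}.

Definition col_sums_one (n : nat) (A : Mat) : Prop :=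
  forall j, (j < n)%nat -> rsum n (fun i => A i j) = 1.

Definition is_AfA {n Sigma} (M : AfA n Sigma) : Prop :=
  (forall s, col_sums_one n (trans M s)) /\
  col_sums_one n (endmat M) /\
  rsum n (init M) = 1.

Definition final_vec {n Sigma} (M : AfA n Sigma) (w : list Sigma) : Vec :=
  mat_vec n (endmat M)
    (fold_left (fun v s => mat_vec n (trans M s) v) w (init M)).

Definition accept_prob {n Sigma} (M : AfA n Sigma) (w : list Sigma) : R :=
  let vf := final_vec M w in
  rsum n (fun j => if acc M j then Rabs (vf j) else 0) /
  rsum n (fun j => Rabs (vf j)).

Definition separates_exactly {n Sigma} (M : AfA n Sigma) (u w : list Sigma) : Prop :=
  (accept_prob M u = 1 /\ accept_prob M w = 0) \/
  (accept_prob M u = 0 /\ accept_prob M w = 1).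

Definition endmarker_identity {n Sigma} (M : AfA n Sigma) : Prop :=
  forall i j, (i < n)%nat -> (j < n)%nat ->
    endmat M i j = if Nat.eqb i j then 1 else 0.

Definition a_pow (k : nat) : list unit := repeat tt k.

(* The 2x2 matrix [[1+c, c], [-c, 1-c]] has columns summing to 1 and maps the
   vector (x, 1-x) to (x+c, 1-x-c): reading a^k moves the initial point along the
   line x + y = 1 by k c.  With c = 1/t and x_0 = -d/t, the word a^d ends at
   (0, 1) and a^(d+t) at (1, 0); accepting only the first state separates them. *)
From Stdlib Require Import Reals List Lra Lia FunctionalExtensionality.
Open Scope R_scope.

Definition shift_mat (c : R) : Mat := fun i j =>
  match i, j with
  | O, O => 1 + c
  | O, _ => c
  | _, O => - c
  | _, _ => 1 - c
  end.

Definition id_mat : Mat := fun i j => if Nat.eqb i j then 1 else 0.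

Definition line_vec (x : R) : Vec := fun i => match i with O => x | _ => 1 - x end.

Definition shift_afa (c x0 : R) : AfA 2 unit :=
  mkAfA 2 unit (fun _ => shift_mat c) id_mat (line_vec x0) (fun j => Nat.eqb j 0).

Lemma rsum2 (f : nat -> R) : rsum 2 f = f 0%nat + f 1%nat.
Proof. unfold rsum; simpl; ring. Qed.

Lemma shift_mat_col_sums (c : R) : col_sums_one 2 (shift_mat c).
Proof.
  intros j Hj; rewrite rsum2.
  destruct j as [|[|j]]; simpl; [ring | ring | lia].
Qed.

Lemma id_mat_col_sums : col_sums_one 2 id_mat.
Proof.
  intros j Hj; rewrite rsum2.
  unfold id_mat; destruct j as [|[|j]]; simpl; [lra | lra | lia].
Qed.

Lemma shift_afa_wf (c x0 : R) : is_AfA (shift_afa c x0).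
Proof.
  split; [|split].
  - intros s; apply shift_mat_col_sums.
  - apply id_mat_col_sums.
  - rewrite rsum2; simpl; ring.
Qed.

Lemma shift_mat_line (c x : R) :
  mat_vec 2 (shift_mat c) (line_vec x) = line_vec (x + c).
Proof.
  apply functional_extensionality; intros i.
  unfold mat_vec; rewrite rsum2.
  destruct i; simpl; ring.
Qed.

Lemma iter_shift_mat_line (c x : R) (k : nat) :
  fold_left (fun v _ => mat_vec 2 (shift_mat c) v) (a_pow k) (line_vec x)
  = line_vec (x + INR k * c).
Proof.
  revert x; induction k as [|k IH]; intros x; cbn [a_pow repeat fold_left].
  - f_equal; simpl; ring.
  - rewrite shift_mat_line, IH, S_INR.
    f_equal; ring.
Qed.

Lemma id_mat_vec2 (v : Vec) (i : nat) : (i < 2)%nat -> mat_vec 2 id_mat v i = v i.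
Proof.
  intros Hi; unfold mat_vec; rewrite rsum2.
  unfold id_mat; destruct i as [|[|i]]; simpl; [lra | lra | lia].
Qed.

Lemma accept_prob_shift_afa (c x0 : R) (k : nat) :
  let x := x0 + INR k * c in
  accept_prob (shift_afa c x0) (a_pow k) = Rabs x / (Rabs x + Rabs (1 - x)).
Proof.
  unfold accept_prob, final_vec; cbn [acc endmat trans init shift_afa].
  rewrite !rsum2, !id_mat_vec2, iter_shift_mat_line by lia.
  simpl; f_equal; ring.
Qed.

Theorem mainTheorem7 :
  forall d t : nat, (0 < t)%nat ->
  exists M : AfA 2 unit,
    is_AfA M /\ endmarker_identity M /\
    separates_exactly M (a_pow d) (a_pow (d + t)).
Proof.
  intros d t Ht.
  assert (Ht_pos : 0 < INR t) by (apply lt_0_INR; lia).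
  set (c := / INR t).
  set (x0 := - INR d * c).
  exists (shift_afa c x0).
  split; [apply shift_afa_wf | split; [intros i j _ _; reflexivity |]].
  right; rewrite !accept_prob_shift_afa.
  assert (Hd : x0 + INR d * c = 0) by (unfold x0; ring).
  assert (Hdt : x0 + INR (d + t) * c = 1)
    by (rewrite plus_INR; unfold x0, c; field; lra).
  rewrite Hd, Hdt, Rminus_0_r, Rminus_diag, Rabs_R0, Rabs_R1.
  split; field; lra.
Qed.
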